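(* There is a regular language $L$ over some finite alphabet $\Sigma$ and a replacement query $\rho$ such that $(q_L,\Delta_\Sigma)$ can be maintained in DynFO by a program all of whose auxiliary relations are nullary, but $(q_L,\Delta_\Sigma\cup\{\rho\})$ cannot be maintained in DynFO by any program all of whose auxiliary relations are nullary.
   Context: Framework. A replacement rule for a relation symbol $R$ is $R := \mu_R(\bar p;\bar x)$ with $\mu_R$ first-order; a replacement query $\rho(\bar p)$ is a set of such rules for distinct relations with a common parameter tuple $\bar p$. A change $\rho(\bar a)$ replaces each ruled relation $R$ by $\{\bar b:\mathcal D\models\mu_R(\bar a;\bar b)\}$. $\Delta_\Sigma$ is the set of single-tuple insertions $R_\sigma:=R_\sigma(x)\lor x=p$ and deletions $R_\sigma:=R_\sigma(x)\land\neg(x=p)$ for $\sigma\in\Sigma$. A dynamic program operates on states of an input database and an auxiliary database over a fixed finite domain; for each allowed replacement query $\rho(\bar p)$ and auxiliary symbol $T$ it has an update formula $\varphi_T(\bar p;\bar x)$ over input and auxiliary schema, and after change $\rho(\bar a)$ the input is replaced by its image and $T$ becomes $\{\bar b:\text{old state}\models\varphi_T(\bar a,\bar b)\}$. It maintains $(q,\Delta)$ if an auxiliary relation $Q$ equals $q$ of the current input after every nonempty sequence of changes from $\Delta$ starting from the empty input and empty auxiliary database. DynFO: first-order update formulas. Strings: a word over $\Sigma$ is represented by a database with domain $\{1,\dots,n\}$, the natural linear order $<$, constants $\min=1$, $\max=n$, and one unary relation $R_\sigma$ per $\sigma\in\Sigma$, each element being in at most one $R_\sigma$; position $i$ carries $\sigma$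 if $i\in R_\sigma$ and $\epsilon$ otherwise, and the database represents the concatenation of these. Changes never modify $<,\min,\max$ and keep each position in at most one $R_\sigma$. $q_L$ is the Boolean query true iff the represented word is in $L$. *)

From mathcomp Require Import all_boot.
Set Implicit Arguments. Unset Strict Implicit. Unset Printing Implicit Defensive.

Record dfa (Sigma : finType) := DFA {
  dfa_state : finType;
  dfa_start : dfa_state;
  dfa_final : pred dfa_state;
  dfa_trans : dfa_state -> Sigma -> dfa_state }.

Definition dfa_accepts (Sigma : finType) (M : dfa Sigma) (w : seq Sigma) : bool :=
  @dfa_final _ M (foldl (@dfa_trans _ M) (@dfa_start _ M) w).

Definition regular (Sigma : finType) (L : seq Sigma -> bool) : Prop :=
  exists M : dfa Sigma, forall w, L w = dfa_accepts M w.

Inductive term := TVar of nat | TMin | TMax.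

Inductive formula (Sigma : Type) (A : Type) :=
| FTrue
| FEq of term & term
| FLt of term & term
| FIn of Sigma & term
| FAux of A & seq term
| FNot of formula Sigma A
| FAnd of formula Sigma A & formula Sigma A
| FOr of formula Sigma A & formula Sigma A
| FExists of nat & formula Sigma A
| FForall of nat & formula Sigma A.

Arguments FTrue {Sigma A}.
Arguments FEq {Sigma A}.
Arguments FLt {Sigma A}.
Arguments FIn {Sigma A}.
Arguments FAux {Sigma A}.
Arguments FNot {Sigma A}.
Arguments FAnd {Sigma A}.
Arguments FOr {Sigma A}.
Arguments FExists {Sigma A}.
Arguments FForall {Sigma A}.

Section Semantics.
Variables (n : nat) (Sigma : finType) (A : Type).
Local Notation D := 'I_n.+1.

(* input database: the relations R_sigma (order and constants are fixed) *)
Definition instate := Sigma -> D -> bool.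
Definition auxstate := A -> seq D -> bool.

Definition eval_term (env : nat -> D) (t : term) : D :=
  match t with TVar i => env i | TMin => ord0 | TMax => ord_max end.

Definition upd_env (env : nat -> D) (i : nat) (d : D) : nat -> D :=
  fun j => if j == i then d else env j.

Fixpoint eval (I : instate) (X : auxstate) (f : formula Sigma A) (env : nat -> D)
  : bool :=
  match f with
  | FTrue => true
  | FEq t1 t2 => eval_term env t1 == eval_term env t2
  | FLt t1 t2 => (nat_of_ord (eval_term env t1) < nat_of_ord (eval_term env t2))%N
  | FIn s t => I s (eval_term env t)
  | FAux a ts => X a (map (eval_term env) ts)
  | FNot g => ~~ eval I X g env
  | FAnd g h => eval I X g env && eval I X h env
  | FOr g h => eval I X g env || eval I X h env
  | FExists i g => [exists d : D, eval I X g (upd_env env i d)]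
  | FForall i g => [forall d : D, eval I X g (upd_env env i d)]
  end.

Definition env_of (ps : seq D) : nat -> D := fun i => nth ord0 ps i.

End Semantics.

(* A replacement query rho(p_1..p_k): for each input relation R_sigma at most
   one rule R_sigma := mu(p; x), mu first order over the input schema.
   Parameters p_1..p_k are variables 0..k-1, x is variable k. *)
Record rquery (Sigma : finType) := RQuery {
  rq_arity : nat;
  rq_rule : Sigma -> option (formula Sigma Empty_set) }.

Definition noaux (n : nat) : Empty_set -> seq 'I_n.+1 -> bool := fun _ _ => false.

Definition apply_rquery (n : nat) (Sigma : finType) (rho : rquery Sigma)
  (ps : seq 'I_n.+1) (I : instate n Sigma) : instate n Sigma :=
  fun s d => match rq_rule rho s with
             | Some mu => eval I (@noaux n) mu (env_of (ps ++ [:: d]))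
             | None => I s d
             end.

Definition valid_string (n : nat) (Sigma : finType) (I : instate n Sigma) : bool :=
  [forall d : 'I_n.+1, forall s : Sigma, forall t : Sigma, I s d ==> I t d ==> (s == t)].

Definition word_of (n : nat) (Sigma : finType) (I : instate n Sigma) : seq Sigma :=
  flatten [seq [seq s <- enum Sigma | I s i] | i <- enum 'I_n.+1].

Definition string_preserving (Sigma : finType) (rho : rquery Sigma) : Prop :=
  forall n (I : instate n Sigma) (ps : seq 'I_n.+1),
    size ps = rq_arity rho -> valid_string I -> valid_string (apply_rquery rho ps I).

Definition delta_sigma (Sigma : finType) (c : Sigma * bool) : rquery Sigma :=
  let: (s, ins) := c in
  @RQuery Sigma 1 (fun t => if t == s then
    Some (if ins then FOr (FIn s (TVar 1)) (FEq (TVar 1) (TVar 0))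
          else FAnd (FIn s (TVar 1)) (FNot (FEq (TVar 1) (TVar 0))))
    else None).

Definition delta_sigma_plus (Sigma : finType) (rho : rquery Sigma)
  (c : option (Sigma * bool)) : rquery Sigma :=
  match c with Some c' => delta_sigma c' | None => rho end.

(* For change c with k parameters and aux symbol T of arity m, the update
   formula upd c T has parameters in variables 0..k-1 and x-bar in k..k+m-1. *)
Record dynprog (Sigma : finType) (C : Type) := DynProg {
  dp_aux : finType;
  dp_arity : dp_aux -> nat;
  dp_Q : dp_aux;
  dp_upd : C -> dp_aux -> formula Sigma dp_aux }.

Definition nullary_prog (Sigma : finType) (C : Type) (P : dynprog Sigma C) : Prop :=
  forall T : dp_aux P, @dp_arity _ _ P T = 0.

Section Run.
Variables (Sigma : finType) (C : Type) (Delta : C -> rquery Sigma)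
          (P : dynprog Sigma C) (n : nat).

Definition pstate := (instate n Sigma * auxstate n (dp_aux P))%type.

Definition init_state : pstate := (fun _ _ => false, fun _ _ => false).

Definition step (st : pstate) (ch : C * seq 'I_n.+1) : pstate :=
  let: (J, X) := st in
  let: (c, ps) := ch in
  (apply_rquery (Delta c) ps J,
   fun T bs => (size bs == @dp_arity _ _ P T) && eval J X (@dp_upd _ _ P c T) (env_of (ps ++ bs))).

End Run.

Definition maintains (Sigma : finType) (C : Type) (Delta : C -> rquery Sigma)
  (P : dynprog Sigma C) (q : forall n, instate n Sigma -> bool) : Prop :=
  forall n (chs : seq (C * seq 'I_n.+1)),
    (0 < size chs)%N ->
    all (fun ch => size ch.2 == rq_arity (Delta ch.1)) chs ->
    all (fun st => valid_string st.1) (scanl (@step _ _ Delta P n) (@init_state _ _ P n) chs) ->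
    (foldl (@step _ _ Delta P n) (@init_state _ _ P n) chs).2 (@dp_Q _ _ P) [::] = q n (foldl (@step _ _ Delta P n) (@init_state _ _ P n) chs).1.

Definition maintainable_nullary_DynFO (Sigma : finType) (C : Type)
  (Delta : C -> rquery Sigma) (q : forall n, instate n Sigma -> bool) : Prop :=
  exists P : dynprog Sigma C, nullary_prog P /\ maintains Delta P q.

Definition qL (Sigma : finType) (L : seq Sigma -> bool) : forall n, instate n Sigma -> bool :=
  fun n I => L (word_of I).

(* Take the unary alphabet and L = words of odd length.  Under single
   insertions and deletions one bit suffices: it flips exactly when the letter
   at the changed position flips.  The extra change rho(p) makes the word the
   prefix of positions <= p, so after rho(p) applied to the empty database a
   nullary program must compute the parity of p + 1 by one first-order formula
   evaluated on empty relations, i.e. over the bare linear order with the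
   parameter p.  By the Ehrenfeucht-Fraisse argument for linear orders, a
   formula of quantifier depth k cannot separate p = 2 * 2^k from
   p = 2 * 2^k + 1 in a domain of size 4 * 2^k + 1. *)

From mathcomp Require Import all_boot zify.
From Stdlib Require Import Classical.

Set Implicit Arguments.
Unset Strict Implicit.
Unset Printing Implicit Defensive.

Lemma ex_least (P : nat -> Prop) m : P m -> exists x, P x /\ forall y, P y -> x <= y.
Proof.
elim/ltn_ind: m => m IH Pm.
case: (classic (exists2 y, y < m & P y)) => [[y lt_ym Py] | no_smaller].
  exact: IH Py.
exists m; split=> // y Py; rewrite leqNgt; apply/negP=> lt_ym.
by apply: no_smaller; exists y.
Qed.

Lemma ex_greatest_below (P : nat -> Prop) b m : m <= b -> P m ->
  exists x, [/\ x <= b, P x & forall y, y <= b -> P y -> y <= x].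
Proof.
move=> le_mb Pm.
have Pbm : (b - m <= b) /\ P (b - (b - m)) by split; [exact: leq_subr | rewrite subKn].
have [z [[le_zb Pz] z_least]] := @ex_least (fun z => z <= b /\ P (b - z)) _ Pbm.
exists (b - z); split=> //; first exact: leq_subr.
move=> y le_yb Py.
have : z <= b - y by apply: z_least; split; [exact: leq_subr | rewrite subKn].
lia.
Qed.

(* Thanks to truncated subtraction the two conjuncts record both the order of
   the pair and its distance, the latter capped at [K]. *)
Definition gap_eq K (x1 y1 x2 y2 : nat) : Prop :=
  minn (y1 - x1) K = minn (y2 - x2) K /\ minn (x1 - y1) K = minn (x2 - y2) K.

Lemma gap_eq_sym K x1 y1 x2 y2 : gap_eq K x1 y1 x2 y2 -> gap_eq K x2 y2 x1 y1.
Proof. by case. Qed.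

Lemma gap_eq_swap K x1 y1 x2 y2 : gap_eq K x1 y1 x2 y2 -> gap_eq K y1 x1 y2 x2.
Proof. by case. Qed.

Lemma gap_eq_refl K x1 x2 : gap_eq K x1 x1 x2 x2.
Proof. by rewrite /gap_eq !subnn. Qed.

Lemma gap_eq_mono K M x1 y1 x2 y2 : K <= M -> gap_eq M x1 y1 x2 y2 -> gap_eq K x1 y1 x2 y2.
Proof.
move=> le_KM [E1 E2].
have capK a : minn (minn a M) K = minn a K by rewrite -minnA (minn_idPr le_KM).
by split; rewrite -!(capK (_ - _)) ?E1 ?E2.
Qed.

Lemma gap_eq_le K x1 y1 x2 y2 : 0 < K -> x1 <= y1 ->
  gap_eq K x1 y1 x2 y2 <-> x2 <= y2 /\ minn (y1 - x1) K = minn (y2 - x2) K.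
Proof. rewrite /gap_eq; lia. Qed.

Lemma gap_eq_eqn K x1 y1 x2 y2 : 0 < K -> gap_eq K x1 y1 x2 y2 -> (x1 == y1) = (x2 == y2).
Proof. rewrite /gap_eq => K0 [E1 E2]; apply/eqP/eqP; lia. Qed.

Lemma gap_eq_ltn K x1 y1 x2 y2 : 0 < K -> gap_eq K x1 y1 x2 y2 -> (x1 < y1) = (x2 < y2).
Proof. rewrite /gap_eq => K0 [E1 _]; apply/idP/idP; lia. Qed.

Lemma minn_interpolate K a b c : minn (a + b) (2 * K) = minn c (2 * K) ->
  exists2 a', a' <= c & minn a K = minn a' K /\ minn b K = minn (c - a') K.
Proof.
move=> E; exists (if a < K then a else if b < K then c - b else K);
  case: ltnP => ha; try case: ltnP => hb; lia.
Qed.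

Lemma subn_split x y z : x <= y -> y <= z -> z - x = (y - x) + (z - y).
Proof. lia. Qed.

Lemma minn_addn_cap K p q p' q' :
  minn p K = minn p' K -> minn q K = minn q' K -> minn (p + q) K = minn (p' + q') K.
Proof. lia. Qed.

Lemma gap_eq_cat K x1 y1 z1 x2 y2 z2 : 0 < K -> x1 <= y1 <= z1 ->
  gap_eq K x1 y1 x2 y2 -> gap_eq K y1 z1 y2 z2 -> gap_eq K x1 z1 x2 z2.
Proof.
move=> K0 /andP[le_xy le_yz].
rewrite !gap_eq_le ?(leq_trans le_xy) // => -[le_xy2 Exy] [le_yz2 Eyz].
rewrite !(subn_split le_xy le_yz) (subn_split le_xy2 le_yz2).
by split; [exact: leq_trans le_yz2 | exact: minn_addn_cap].
Qed.

Lemma gap_interpolate K l1 d1 u1 l2 u2 : 0 < K -> l1 <= d1 <= u1 ->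
  gap_eq (2 * K) l1 u1 l2 u2 ->
  exists2 d2, d2 <= u2 & gap_eq K l1 d1 l2 d2 /\ gap_eq K d1 u1 d2 u2.
Proof.
move=> K0 /andP[le_ld le_du].
rewrite gap_eq_le ?muln_gt0 ?(leq_trans le_ld) // (subn_split le_ld le_du).
move=> -[le_lu2 /minn_interpolate[a le_a [Ea Eb]]].
exists (l2 + a); first by rewrite -leq_subRL.
rewrite !gap_eq_le ?leq_addr ?addKn //; split=> //.
by rewrite -leq_subRL // subnDA.
Qed.

Section OrderGaps.
Variable N : nat.
Local Notation D := 'I_N.+1.

Definition tval (e : nat -> D) (t : term) : nat := eval_term e t.

Definition gap_equiv k (e1 e2 : nat -> D) : Prop :=
  forall t u, gap_eq (2 ^ k) (tval e1 t) (tval e1 u) (tval e2 t) (tval e2 u).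

Lemma gap_equiv_sym k e1 e2 : gap_equiv k e1 e2 -> gap_equiv k e2 e1.
Proof. by move=> E t u; apply: gap_eq_sym. Qed.

Lemma term_bracket (e : nat -> D) (d : nat) : d <= N -> exists tl tu,
  [/\ tval e tl <= d <= tval e tu,
      forall t, tval e t <= d -> tval e t <= tval e tl
    & forall t, d <= tval e t -> tval e tu <= tval e t].
Proof.
move=> le_dN.
have [l [le_ld [tl El] l_max]] :=
  @ex_greatest_below (fun x => exists t, tval e t = x) d 0 (leq0n d) (ex_intro _ TMin erefl).
have [u [[le_du [tu Eu]] u_min]] :=
  @ex_least (fun x => d <= x /\ exists t, tval e t = x) N (conj le_dN (ex_intro _ TMax erefl)).
subst l u; exists tl, tu; split=> [|t le_td|t le_dt]; first by rewrite le_ld.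
- exact: l_max (ex_intro _ t erefl).
- exact: u_min (conj le_dt (ex_intro _ t erefl)).
Qed.

(* Duplicator's answer in the Ehrenfeucht-Fraisse game: [d2] is placed between
   the images of the nearest terms around [d1]. *)
Lemma gap_equiv_extend k e1 e2 (d1 : D) : gap_equiv k.+1 e1 e2 ->
  exists d2 : D, forall t, gap_eq (2 ^ k) (tval e1 t) d1 (tval e2 t) d2.
Proof.
move=> E; have K0 : 0 < 2 ^ k by rewrite expn_gt0.
have [tl [tu [lu_d1 below above]]] := term_bracket e1 (leq_ord d1).
have := E tl tu; rewrite expnS => /(gap_interpolate K0 lu_d1)[d2 le_d2u [Eld Edu]].
exists (Ordinal (leq_ltn_trans le_d2u (ltn_ord _))) => t /=.
have le_k : 2 ^ k <= 2 ^ k.+1 by rewrite leq_pexp2l.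
have Etl := gap_eq_mono le_k (E t tl); have Etu := gap_eq_mono le_k (E tu t).
case/andP: lu_d1 => le_ld le_du.
case: (leqP (tval e1 t) d1) => [le_td | /ltnW le_dt].
- by apply: (gap_eq_cat K0 _ Etl Eld); rewrite below.
- by apply/gap_eq_swap/(gap_eq_cat K0 _ Edu Etu); rewrite le_du above.
Qed.

Lemma tval_upd e i (d : D) t :
  tval (upd_env e i d) t = if t is TVar j then (if j == i then nat_of_ord d else tval e t)
                           else tval e t.
Proof. by case: t => //= j; rewrite /tval /= /upd_env; case: eqP. Qed.

Lemma gap_equiv_upd k e1 e2 i (d1 : D) : gap_equiv k.+1 e1 e2 ->
  exists d2 : D, gap_equiv k (upd_env e1 i d1) (upd_env e2 i d2).
Proof.
move=> E; have [d2 Ed] := gap_equiv_extend d1 E; exists d2 => t u.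
have le_k : 2 ^ k <= 2 ^ k.+1 by rewrite leq_pexp2l.
have fresh t' : tval (upd_env e1 i d1) t' = tval e1 t' /\ tval (upd_env e2 i d2) t' = tval e2 t'
  \/ tval (upd_env e1 i d1) t' = d1 /\ tval (upd_env e2 i d2) t' = d2.
  by rewrite !tval_upd; case: t' => [j||]; auto; case: eqP; auto.
case: (fresh t) => -[-> ->]; case: (fresh u) => -[-> ->].
- exact: gap_eq_mono le_k (E t u).
- exact: Ed.
- exact: gap_eq_swap (Ed u).
- exact: gap_eq_refl.
Qed.

End OrderGaps.

Fixpoint qdepth (Sigma A : Type) (f : formula Sigma A) : nat :=
  match f with
  | FNot g => qdepth g
  | FAnd g h | FOr g h => maxn (qdepth g) (qdepth h)
  | FExists _ g | FForall _ g => (qdepth g).+1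
  | _ => 0
  end.

Lemma eval_empty_gap_equiv (Sigma : finType) (A : Type) N (f : formula Sigma A) k
    (e1 e2 : nat -> 'I_N.+1) :
  qdepth f <= k -> gap_equiv k e1 e2 ->
  eval (fun _ _ => false) (fun _ _ => false) f e1
  = eval (fun _ _ => false) (fun _ _ => false) f e2.
Proof.
elim: f k e1 e2 => //= [t u | t u | g IHg | g IHg h IHh | g IHg h IHh | i g IHg | i g IHg]
  k e1 e2 le_fk E.
- by rewrite -!val_eqE; apply: gap_eq_eqn (E t u); rewrite expn_gt0.
- by apply: gap_eq_ltn (E t u); rewrite expn_gt0.
- by rewrite (IHg k e1 e2).
- by move: le_fk; rewrite geq_max => /andP[le_gk le_hk];
    rewrite (IHg k e1 e2) ?(IHh k e1 e2).
- by move: le_fk; rewrite geq_max => /andP[le_gk le_hk];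
    rewrite (IHg k e1 e2) ?(IHh k e1 e2).
- case: k le_fk E => // k le_gk E; apply/existsP/existsP => -[d Ed].
  + by have [d' E'] := gap_equiv_upd i d E; exists d'; rewrite -(IHg k _ _ le_gk E').
  + have [d' E'] := gap_equiv_upd i d (gap_equiv_sym E).
    by exists d'; rewrite (IHg k _ _ le_gk (gap_equiv_sym E')).
- case: k le_fk E => // k le_gk E; apply/forallP/forallP => Ed d.
  + have [d' E'] := gap_equiv_upd i d (gap_equiv_sym E).
    by rewrite -(IHg k _ _ le_gk (gap_equiv_sym E')).
  + by have [d' E'] := gap_equiv_upd i d E; rewrite (IHg k _ _ le_gk E').
Qed.

Definition odd_length (w : seq unit) : bool := odd (size w).

Lemma odd_length_regular : regular odd_length.
Proof.
exists (@DFA unit (bool : finType) false id (fun b _ => ~~ b)) => w.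
rewrite /dfa_accepts /odd_length /=.
suff parity b : foldl (fun b _ => ~~ b) b w = b (+) odd (size w) by rewrite parity.
by elim: w b => [|_ w IHw] b /=; rewrite ?addbF // IHw addNb addbN.
Qed.

Lemma valid_string_unit n (I : instate n unit) : valid_string I.
Proof. by apply/forallP=> d; apply/forallP=> -[]; apply/forallP=> -[]; rewrite !implybT. Qed.

Lemma size_word_unit n (I : instate n unit) : size (word_of I) = count (I tt) (enum 'I_n.+1).
Proof.
have enum_unit : enum (unit : finType) = [:: tt] by rewrite enumT unlock.
rewrite /word_of enum_unit; elim: (enum 'I_n.+1) => //= i s <-.
by case: (I tt i).
Qed.

Lemma count_update (T : eqType) (s : seq T) (a : pred T) p b : uniq s -> p \in s ->
  count (fun x => if x == p then b else a x) s + a p = count a s + b.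
Proof.
move=> uniq_s s_p; rewrite !(permP (perm_to_rem s_p)) /= eqxx.
have p'rem : p \notin rem p s by rewrite mem_rem_uniqF.
have -> : count (fun x => if x == p then b else a x) (rem p s) = count a (rem p s).
  apply: eq_in_count => x x_rem.
  by case: eqP => // Ex; rewrite Ex (negbTE p'rem) in x_rem.
lia.
Qed.

Lemma odd_count_update (T : eqType) (s : seq T) (a : pred T) p b : uniq s -> p \in s ->
  odd (count (fun x => if x == p then b else a x) s) = odd (count a s) (+) (a p (+) b).
Proof.
move=> uniq_s s_p; have := congr1 odd (count_update a b uniq_s s_p).
rewrite !oddD !oddb => E.
by rewrite -[LHS](addbK (a p)) E -addbA (addbC b).
Qed.

Definition fxor (Sigma A : Type) (g h : formula Sigma A) : formula Sigma A :=
  FOr (FAnd g (FNot h)) (FAnd (FNot g) h).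

Definition parity_prog : dynprog unit (unit * bool) :=
  @DynProg unit (unit * bool) unit (fun _ => 0) tt
    (fun c _ => fxor (FAux tt [::]) (if c.2 then FNot (FIn tt (TVar 0)) else FIn tt (TVar 0))).

Lemma apply_delta_sigma_unit n (J : instate n unit) b p x :
  apply_rquery (delta_sigma (tt, b)) [:: p] J tt x = if x == p then b else J tt x.
Proof.
by rewrite /apply_rquery; case: b => /=; case: (x == p); rewrite ?orbT ?orbF ?andbT ?andbF.
Qed.

Definition parity_inv n (st : pstate parity_prog n) : Prop :=
  st.2 tt [::] = odd (count (st.1 tt) (enum 'I_n.+1)).

Lemma parity_inv_step n (st : pstate parity_prog n) b p :
  parity_inv st -> parity_inv (step (@delta_sigma unit) st ((tt, b), [:: p])).
Proof.
case: st => J X; rewrite /parity_inv /= => inv_JX.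
have /= -> := eq_count (apply_delta_sigma_unit J b p) (enum 'I_n.+1).
rewrite odd_count_update ?enum_uniq ?mem_enum // -inv_JX.
by case: b; rewrite /= /env_of /=; case: (X tt [::]); case: (J tt p).
Qed.

Lemma parity_inv_foldl n (chs : seq ((unit * bool) * seq 'I_n.+1)) st :
  all (fun ch => size ch.2 == rq_arity (@delta_sigma unit ch.1)) chs ->
  parity_inv st -> parity_inv (foldl (@step _ _ (@delta_sigma unit) parity_prog n) st chs).
Proof.
elim: chs st => //= -[[[] b] ps] chs IHchs st /andP[size_ps ok_chs] inv_st.
case: ps size_ps => [|p []] // _.
exact/IHchs/parity_inv_step.
Qed.

Lemma odd_length_maintainable : maintainable_nullary_DynFO (@delta_sigma unit) (qL odd_length).
Proof.
exists parity_prog; split=> // n chs _ ok_chs _.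
rewrite /qL /odd_length size_word_unit; apply: parity_inv_foldl => //.
by rewrite /parity_inv /= count_pred0.
Qed.

Definition prefix_query : rquery unit :=
  @RQuery unit 1 (fun _ => Some (FOr (FLt (TVar 1) (TVar 0)) (FEq (TVar 1) (TVar 0)))).

Lemma count_iota_leq m p : count (fun x => x <= p) (iota 0 m) = minn m p.+1.
Proof. by elim: m => // m IHm; rewrite -addn1 iotaD count_cat IHm /=; lia. Qed.

Lemma count_prefix N (p : 'I_N.+1) :
  count (fun d : 'I_N.+1 => (d < p) || (d == p)) (enum 'I_N.+1) = p.+1.
Proof.
have le_p (d : 'I_N.+1) : (d < p) || (d == p) = (val d <= p) by rewrite orbC -val_eqE -leq_eqVlt.
rewrite (eq_count le_p) -(count_map val (fun x => x <= p)) val_enum_ord.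
by rewrite count_iota_leq; apply/minn_idPr.
Qed.

Lemma nullary_response (P : dynprog unit (option (unit * bool))) : nullary_prog P ->
  maintains (delta_sigma_plus prefix_query) P (qL odd_length) ->
  forall n (p : 'I_n.+1), eval (fun _ _ => false) (fun _ _ => false)
    (@dp_upd _ _ P None (@dp_Q _ _ P)) (env_of [:: p]) = odd p.+1.
Proof.
move=> nullP maintP n p.
have := maintP n [:: (None, [:: p])] erefl erefl.
rewrite [all _ _]/= !valid_string_unit => /(_ isT) response.
rewrite /= nullP eqxx andTb in response.
by rewrite response /qL /odd_length size_word_unit -(count_prefix p).
Qed.

Lemma tval_env1 N (p : 'I_N.+1) t :
  tval (env_of [:: p]) t = if t is TVar 0 then nat_of_ord p else if t is TMax then N else 0.
Proof. by case: t => [[|j]||]; rewrite /tval /env_of /= ?nth_nil. Qed.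

Lemma gap_equiv_env1 k N (p1 p2 : 'I_N.+1) :
  2 ^ k <= p1 -> 2 ^ k <= p2 -> p1 + 2 ^ k <= N -> p2 + 2 ^ k <= N ->
  gap_equiv k (env_of [:: p1]) (env_of [:: p2]).
Proof.
move=> ? ? ? ? t u; rewrite !tval_env1 /gap_eq.
by case: t => [[|?]||]; case: u => [[|?]||]; lia.
Qed.

Lemma prefix_parity_not_maintainable :
  ~ maintainable_nullary_DynFO (delta_sigma_plus prefix_query) (qL odd_length).
Proof.
move=> [P [nullP maintP]]; set k := qdepth (@dp_upd _ _ P None (@dp_Q _ _ P)).
have K0 : 0 < 2 ^ k by rewrite expn_gt0.
have lt_p1 : 2 * 2 ^ k < (4 * 2 ^ k).+1 by lia.
have lt_p2 : (2 * 2 ^ k).+1 < (4 * 2 ^ k).+1 by lia.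
have far : gap_equiv k (env_of [:: Ordinal lt_p1]) (env_of [:: Ordinal lt_p2]).
  by apply: gap_equiv_env1 => /=; lia.
have := eval_empty_gap_equiv (leqnn k) far.
by rewrite !(nullary_response nullP maintP) /=; case: (odd _).
Qed.

Theorem theorem7p4 :
  exists (Sigma : finType) (L : seq Sigma -> bool) (rho : rquery Sigma),
    regular L /\ string_preserving rho /\
    maintainable_nullary_DynFO (@delta_sigma Sigma) (qL L) /\
    ~ maintainable_nullary_DynFO (delta_sigma_plus rho) (qL L).
Proof.
exists (unit : finType), odd_length, prefix_query; split; first exact: odd_length_regular.
split; first by move=> n I ps _ _; apply: valid_string_unit.
split; [exact: odd_length_maintainable | exact: prefix_parity_not_maintainable].
Qed.
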